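(* Let $\tau>0$, $u_n\in\mathcal V_{[0,1]}$, $X:=\{u\in\mathcal V_{[0,1]}:\mathcal M(u)=\mathcal M(u_n)\}$, and for $\lambda\le1$ let $f_\lambda(u):=(1-\lambda)\|u\|^2_{\mathcal V}-2\langle u,e^{-\tau\Delta}u_n\rangle_{\mathcal V}$. Then $f_\lambda\to f_1$ uniformly on $X$ as $\lambda\uparrow1$. Furthermore, if for each $\lambda$ in a set accumulating at $1$ from below, $u^\lambda\in X$ minimises $f_\lambda$ over $X$, and $u^\lambda\to u$ as $\lambda\uparrow1$, then $u\in X$ and $u$ maximises $\langle v,e^{-\tau\Delta}u_n\rangle_{\mathcal V}$ over $v\in X$.
   Context: $G=(V,E)$ is a finite, simple, connected, undirected graph with weights $\omega_{ij}=\omega_{ji}>0$ for $ij\in E$, $\omega_{ij}=0$ otherwise; $d_i=\sum_j\omega_{ij}$, $r\in[0,1]$ fixed. $\mathcal V$ = functions $V\to\mathbb R$ with $\langle u,v\rangle_{\mathcal V}=\sum_i u_iv_id_i^r$ and norm $\|\cdot\|_{\mathcal V}$; $\mathcal V_{[0,1]}$ = functions $V\to[0,1]$. $(\Delta u)_i=d_i^{-r}\sum_j\omega_{ij}(u_i-u_j)$, $e^{-\tau\Delta}$ its matrix exponential. $\mathbf 1$ all-ones; $\mathcal M(u)=\langle u,\mathbf 1\rangle_{\mathcal V}$. *)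

From HB Require Import structures.
From mathcomp Require Import all_boot all_order all_algebra.
From mathcomp Require Import all_classical all_reals all_analysis.
Set Implicit Arguments. Unset Strict Implicit. Unset Printing Implicit Defensive.
Import Order.TTheory GRing.Theory Num.Theory.
Import numFieldNormedType.Exports.
Local Open Scope ring_scope.
Local Open Scope classical_set_scope.

Section GraphDefs.
Variables (R : realType) (n : nat).
Implicit Types (w : 'I_n.+1 -> 'I_n.+1 -> R) (u v : 'I_n.+1 -> R).

Definition weighted_graph w : Prop :=
  [/\ forall i j, w i j = w j i,
      forall i j, 0 <= w i j,
      forall i, w i i = 0
    & forall i j, connect [rel a b | w a b != 0] i j].

Definition degree w (i : 'I_n.+1) : R := \sum_j w i j.

Definition inprodV w (r : R) u v : R := \sum_i u i * v i * (degree w i `^ r).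
Definition normV2 w (r : R) u : R := inprodV w r u u.

Definition mass w (r : R) u : R := inprodV w r u (fun _ => 1).

(* Laplacian matrix: (Delta u)_i = d_i^{-r} sum_j w_ij (u_i - u_j) *)
Definition laplacian w (r : R) : 'M[R]_n.+1 :=
  \matrix_(i, j) (degree w i `^ (- r) *
                  ((i == j)%:R * degree w i - w i j)).

Definition expmx (A : 'M[R]_n.+1) : 'M[R]_n.+1 :=
  lim (series (fun k : nat => (k`!%:R)^-1 *: A ^+ k) @ \oo).

Definition applymx (A : 'M[R]_n.+1) u : 'I_n.+1 -> R :=
  fun i => \sum_j A i j * u j.

Definition in01 u : Prop := forall i, 0 <= u i <= 1.

Definition Xset w r un : set ('I_n.+1 -> R) :=
  [set u | in01 u /\ mass w r u = mass w r un].

Definition f_lam w r tau un (lam : R) u : R :=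
  (1 - lam) * normV2 w r u
  - 2 * inprodV w r u (applymx (expmx (- tau *: laplacian w r)) un).

End GraphDefs.

From HB Require Import structures.
From mathcomp Require Import all_boot all_order all_algebra.
From mathcomp Require Import all_classical all_reals all_analysis.
From mathcomp Require Import lra.
Set Implicit Arguments. Unset Strict Implicit. Unset Printing Implicit Defensive.
Import Order.TTheory GRing.Theory Num.Theory.
Import numFieldNormedType.Exports.
Local Open Scope ring_scope.
Local Open Scope classical_set_scope.

(* Only two facts about f_lam matter: f_lam lam - f_1 = (1 - lam) ||.||^2, and
   ||u||^2 <= ||1||^2 on V_[0,1].  The first gives the uniform convergence.  For
   the second part, X is closed under pointwise limits (V_[0,1] is closed and
   the mass is continuous), and comparing f_lam at its minimiser u^lam with any
   v in X yields <v, b> <= <u^lam, b> + (1 - lam) ||1||^2, where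
   b = e^{-tau Delta} u_n; letting lam -> 1 gives <v, b> <= <u, b>. *)

Lemma exists_pos_mul_lt (R : realFieldType) (C e : R) :
  0 <= C -> 0 < e -> exists2 d : R, 0 < d & d * C < e.
Proof.
move=> C0 e0; have C1 : 0 < C + 1 by rewrite ltr_wpDl.
exists (e / (C + 1)); first by rewrite divr_gt0.
by rewrite mulrAC ltr_pdivrMr // ltr_pM2l // ltrDl.
Qed.

Lemma eq_of_dist_lt (R : realFieldType) (x y : R) :
  (forall e, 0 < e -> `|x - y| < e) -> x = y.
Proof.
move=> dxy; apply/eqP; rewrite -subr_eq0 -normr_le0.
by apply/ler_addgt0Pr => e e0; rewrite add0r ltW ?dxy.
Qed.

Section GraphFunctional.
Variables (R : realType) (n : nat) (w : 'I_n.+1 -> 'I_n.+1 -> R) (r : R).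
Implicit Types (u v b : 'I_n.+1 -> R) (lam e d : R).

Local Notation heat tau un := (applymx (expmx (- tau *: laplacian w r)) un).

Lemma normV2_ge0 u : 0 <= normV2 w r u.
Proof. by apply: sumr_ge0 => i _; rewrite -expr2 mulr_ge0 ?sqr_ge0 ?powR_ge0. Qed.

Lemma normV2_le1 u : in01 u -> normV2 w r u <= normV2 w r (fun _ => 1).
Proof.
move=> u01; apply: ler_sum => i _; rewrite mulr1 mul1r.
have /andP[ui0 ui1] := u01 i.
by rewrite ler_piMl ?powR_ge0 // -expr2 expr_le1.
Qed.

Lemma ler_dist_inprodV b u v e :
  (forall i, `|v i - u i| <= e) ->
  `|inprodV w r v b - inprodV w r u b| <= e * \sum_i `|b i| * degree w i `^ r.
Proof.
move=> uv; rewrite /inprodV -sumrB mulr_sumr.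
apply: le_trans (ler_norm_sum _ _ _) _; apply: ler_sum => i _.
rewrite -!mulrA -mulrBl normrM normrM (ger0_norm (powR_ge0 _ _)).
by rewrite ler_wpM2r ?uv // mulr_ge0 ?powR_ge0.
Qed.

Lemma inprodV_continuous_l b u e : 0 < e ->
  exists2 d, 0 < d & forall v, (forall i, `|v i - u i| < d) ->
    `|inprodV w r v b - inprodV w r u b| < e.
Proof.
move=> e0; have K0 : 0 <= \sum_i `|b i| * degree w i `^ r.
  by apply: sumr_ge0 => i _; rewrite mulr_ge0 ?powR_ge0.
have [d d0 dK] := exists_pos_mul_lt K0 e0; exists d => // v uv.
by apply: le_lt_trans dK; apply: ler_dist_inprodV => i; apply: ltW.
Qed.

Lemma in01_closed u :
  (forall e, 0 < e -> exists v, in01 v /\ forall i, `|v i - u i| < e) -> in01 u.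
Proof.
move=> approx i; have close e : 0 < e -> exists v, in01 v /\ `|v i - u i| < e.
  by move=> e0; have [v [v01 vu]] := approx e e0; exists v.
apply/andP; split; apply/ler_addgt0Pr => e e0.
- have [v [v01 vu]] := close e e0; have /andP[vi0 _] := v01 i.
  by move: vu; rewrite ltr_norml; lra.
- have [v [v01 vu]] := close e e0; have /andP[_ vi1] := v01 i.
  by move: vu; rewrite ltr_norml; lra.
Qed.

Lemma Xset_closed un u :
  (forall e, 0 < e -> exists v, Xset w r un v /\ forall i, `|v i - u i| < e) ->
  Xset w r un u.
Proof.
move=> approx; split.
  by apply: in01_closed => e e0; have [v [[v01 _] vu]] := approx e e0; exists v.
apply: eq_of_dist_lt => e e0.
have [d d0 mass_near] := inprodV_continuous_l (fun _ => 1) u e0.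
have [v [[_ mv] vu]] := approx d d0.
by rewrite distrC -mv; apply: mass_near.
Qed.

Lemma f_lamB1 tau un lam u :
  f_lam w r tau un lam u - f_lam w r tau un 1 u = (1 - lam) * normV2 w r u.
Proof. by rewrite /f_lam subrr mul0r sub0r opprK addrNK. Qed.

Lemma f_lam_minimizer_gap tau un lam u v :
  lam <= 1 -> in01 v -> f_lam w r tau un lam u <= f_lam w r tau un lam v ->
  inprodV w r v (heat tau un) <=
    inprodV w r u (heat tau un) + (1 - lam) * normV2 w r (fun _ => 1).
Proof.
rewrite /f_lam => lam1 v01 fuv.
have Nv : (1 - lam) * normV2 w r v <= (1 - lam) * normV2 w r (fun _ => 1).
  by rewrite ler_wpM2l ?subr_ge0 ?normV2_le1.
have Nu : 0 <= (1 - lam) * normV2 w r u by rewrite mulr_ge0 ?subr_ge0 ?normV2_ge0.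
have N1 : 0 <= (1 - lam) * normV2 w r (fun _ => 1).
  by rewrite mulr_ge0 ?subr_ge0 ?normV2_ge0.
lra.
Qed.

Lemma approximant_near_one (S : set R) (ul : R -> 'I_n.+1 -> R) u :
  (forall d, 0 < d -> exists lam, S lam /\ 1 - d < lam) ->
  (forall e, 0 < e -> exists2 d, 0 < d &
     forall lam, S lam -> 1 - d < lam -> forall i, `|ul lam i - u i| < e) ->
  forall e d, 0 < e -> 0 < d ->
    exists lam, [/\ S lam, 1 - d < lam & forall i, `|ul lam i - u i| < e].
Proof.
move=> S_near1 ul_cvg e d e0 d0; have [d' d'0 ul_near] := ul_cvg e e0.
have [lam [Slam lam_near]] := S_near1 (Num.min d d') ltac:(by rewrite lt_min d0).
have lam_d : 1 - d < lam by apply: le_lt_trans lam_near; rewrite lerB // ge_min lexx.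
have lam_d' : 1 - d' < lam.
  by apply: le_lt_trans lam_near; rewrite lerB // ge_min lexx orbT.
by exists lam; split => //; apply: ul_near.
Qed.

End GraphFunctional.

Theorem theorem30 (R : realType) (n : nat) (w : 'I_n.+1 -> 'I_n.+1 -> R)
  (r tau : R) (un : 'I_n.+1 -> R) :
  weighted_graph w -> 0 <= r <= 1 -> 0 < tau -> in01 un ->
  (* uniform convergence f_lambda -> f_1 on X as lambda -> 1 from below *)
  (forall eps : R, 0 < eps -> exists2 delta : R, 0 < delta &
     forall lam : R, 1 - delta < lam -> lam <= 1 ->
     forall u, Xset w r un u ->
       `|f_lam w r tau un lam u - f_lam w r tau un 1 u| < eps)
  /\
  (forall (S : set R) (ul : R -> 'I_n.+1 -> R) (u : 'I_n.+1 -> R),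
     (forall lam, S lam -> lam < 1) ->
     (forall delta : R, 0 < delta -> exists lam, S lam /\ 1 - delta < lam) ->
     (forall lam, S lam ->
        Xset w r un (ul lam) /\
        forall v, Xset w r un v ->
          f_lam w r tau un lam (ul lam) <= f_lam w r tau un lam v) ->
     (forall eps : R, 0 < eps -> exists2 delta : R, 0 < delta &
        forall lam, S lam -> 1 - delta < lam ->
        forall i, `|ul lam i - u i| < eps) ->
     Xset w r un u /\
     forall v, Xset w r un v ->
       inprodV w r v (applymx (expmx (- tau *: laplacian w r)) un)
       <= inprodV w r u (applymx (expmx (- tau *: laplacian w r)) un)).
Proof.
move=> _ _ _ _; set C := normV2 w r (fun _ => 1).
have C0 : 0 <= C by apply: normV2_ge0.
split=> [e e0 | S ul u S_lt1 S_near1 ul_min ul_cvg].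
  have [d d0 dC] := exists_pos_mul_lt C0 e0; exists d => // lam lam_d lam1 u [u01 _].
  rewrite f_lamB1 ger0_norm ?mulr_ge0 ?subr_ge0 ?normV2_ge0 //.
  apply: le_lt_trans dC; rewrite ler_pM ?subr_ge0 ?normV2_ge0 ?normV2_le1 //.
  by rewrite lerBlDr addrC -lerBlDr ltW.
have near1 := approximant_near_one S_near1 ul_cvg.
split=> [|v Xv].
  apply: Xset_closed => e e0; have [lam [Slam _ ul_u]] := near1 e 1 e0 ltr01.
  by exists (ul lam); split => //; case: (ul_min lam Slam).
apply/ler_addgt0Pr => e e0; have e20 : 0 < e / 2 by rewrite divr_gt0.
have [d d0 inprod_near] := inprodV_continuous_l w r
  (applymx (expmx (- tau *: laplacian w r)) un) u e20.
have [d' d'0 d'C] := exists_pos_mul_lt C0 e20.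
have [lam [Slam lam_d' ul_u]] := near1 d d' d0 d'0.
have [_ ul_minimal] := ul_min lam Slam.
have := f_lam_minimizer_gap (ltW (S_lt1 _ Slam)) Xv.1 (ul_minimal v Xv).
rewrite -/C => gap.
have lamC : (1 - lam) * C <= d' * C by rewrite ler_wpM2r // lerBlDl -lerBlDr ltW.
have := inprod_near _ ul_u; rewrite ltr_norml; lra.
Qed.
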